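(* Let $\lambda$ be a partition, $n\ge\ell(\lambda)$, and $M\in\mathrm{MLQ}(\lambda,n)$. Then $\operatorname{maj}(M)=\operatorname{charge}(\mathrm{cw}(M))$.
   Context: For a partition $\lambda$, $\lambda'$ is the conjugate partition. For $L=\lambda_1$ and $n\ge\ell(\lambda)$, $\mathrm{MLQ}(\lambda,n)$ is the set of tuples $M=(B_1,\dots,B_L)$ of subsets of $[n]$ with $|B_j|=\lambda'_j$, drawn as an $L\times n$ grid with rows $1..L$ bottom to top, columns $1..n$ left to right, a ball in cell $(r,j)$ iff $j\in B_r$. The column word $\mathrm{cw}(M)$ scans columns left to right and, within each column, top to bottom, recording the row number of each ball (so it has content $\lambda'$). Major index (Ferrari–Martin labelling). For $r=L,\dots,2$: every unlabelled ball of row $r$ gets label $r$; then the balls of row $r$, in decreasing label order (left to right among equal labels), are each paired with the first unlabelled ball of row $r-1$ weakly to the right, scanning cyclically ($j,j+1,\dots,n,1,\dots$); that ball gets the same label; the pairing wraps if the lower ball is in a column strictly left of the upper ball. Unlabelled balls in row 1 get label 1. $\operatorname{maj}(M)=\sum(\ell(p)-r(p)+1)$ over wrapping pairings $p$, $r(p)$ the row of the upper ball, $\ell(p)$ its label. Charge. For a permutation $\tau$ of $[m]$ in one-line notation, $\operatorname{charge}(\tau)=\sum(m-i)$ over $i\in[m-1]$ such that $i$ is to the left of $i+1$. For a word $w$ with letters $1,\dots,k$ whose multiplicities are weakly decreasing ($\#1\ge\#2\ge\cdots$), extract the first charge subword by locating the leftmost occurrence of $k$, then the next occurrence of $k-1$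 to its right cyclically (wrapping to the beginning if needed), then of $k-2$, …, down to $1$; these letters in positional order form a permutation $w^{(1)}$ of $[k]$. Remove them and repeat with the remaining letters to obtain $w^{(2)},\dots$. Then $\operatorname{charge}(w)=\sum_i\operatorname{charge}(w^{(i)})$. *)

From mathcomp Require Import all_boot.
Set Implicit Arguments. Unset Strict Implicit. Unset Printing Implicit Defensive.

Definition is_partition (lam : seq nat) : bool :=
  sorted geq lam && all (fun x => 0 < x) lam.

Definition conj_part (lam : seq nat) : seq nat :=
  [seq count (fun x => j <= x) lam | j <- iota 1 (head 0 lam)].

(* M : seq {set 'I_n}; row r (1 <= r <= size M) is nth set0 M r.-1,
   columns 1..n are represented by 'I_n (0-based). *)
Definition ball n (M : seq {set 'I_n}) (r : nat) (j : 'I_n) : bool :=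
  j \in nth set0 M r.-1.

Definition in_MLQ (lam : seq nat) n (M : seq {set 'I_n}) : bool :=
  (size M == head 0 lam) &&
  all2 (fun (B : {set 'I_n}) c => #|B| == c) M (conj_part lam).

(* Column word: columns left to right, in each column top to bottom. *)
Definition cw n (M : seq {set 'I_n}) : seq nat :=
  flatten [seq [seq r <- rev (iota 1 (size M)) | ball M r j] | j <- enum 'I_n].

Definition cols n (M : seq {set 'I_n}) (r : nat) : seq nat :=
  map val (filter (ball M r) (enum 'I_n)).

(* One step at row r: [lab c] is the label already given to the ball of
   row r in column c (0 = unlabelled).  Returns the labelling of row r-1
   produced by the pairings, and the contribution of the wrapping pairings. *)
Definition step n (M : seq {set 'I_n}) (r : nat) (lab : nat -> nat)
  : (nat -> nat) * nat :=
  let up := fun c => if lab c == 0 then r else lab c in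
  let order := sort (fun a b => (up b < up a) || ((up a == up b) && (a <= b)))
                    (cols M r) in
  foldl (fun (st : (nat -> nat) * nat) c =>
           let low := st.1 in
           let cand := [seq d <- cols M r.-1 | low d == 0] in
           match cand with
           | [::] => st
           | d0 :: _ =>
             let d := head d0 [seq d <- cand | c <= d] in
             ((fun x => if x == d then up c else low x),
              st.2 + (if d < c then up c - r + 1 else 0))
           end)
        ((fun _ => 0), 0) order.

Fixpoint majrec n (M : seq {set 'I_n}) (r : nat) (lab : nat -> nat) : nat :=
  match r with
  | S ((S _) as r0) => let p := step M r lab in p.2 + majrec M r0 p.1
  | _ => 0
  end.

Definition maj n (M : seq {set 'I_n}) : nat := majrec M (size M) (fun _ => 0).

Definition charge_perm (t : seq nat) : nat :=
  let m := size t in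
  \sum_(1 <= i < m) (if index i t < index i.+1 t then m - i else 0).

Definition maxletter (w : seq nat) : nat := foldr maxn 0 w.

Definition next_occ (w : seq nat) (l p : nat) : nat :=
  let qs := [seq q <- iota 0 (size w) | nth 0 w q == l] in
  match [seq q <- qs | p < q] with
  | q :: _ => q
  | [::] => head (size w) qs
  end.

Fixpoint chain (w : seq nat) (l p : nat) : seq nat :=
  match l with
  | 0 => [::]
  | l'.+1 => let q := next_occ w l p in q :: chain w l' q
  end.

Definition first_positions (w : seq nat) : seq nat :=
  let k := maxletter w in
  if k is 0 then [::] else let p := index k w in p :: chain w k.-1 p.

Definition charge_subword (w : seq nat) : seq nat :=
  [seq nth 0 w q | q <- [seq q <- iota 0 (size w) | q \in first_positions w]].

Definition charge_rest (w : seq nat) : seq nat :=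
  [seq nth 0 w q | q <- [seq q <- iota 0 (size w) | q \notin first_positions w]].

Fixpoint charge_aux (fuel : nat) (w : seq nat) : nat :=
  match fuel with
  | 0 => 0
  | f.+1 => if w is [::] then 0
            else charge_perm (charge_subword w) + charge_aux f (charge_rest w)
  end.

Definition charge (w : seq nat) : nat := charge_aux (size w) w.

(* In the top row every ball has the maximal label L, and balls of equal label
   may be paired in any order without changing the resulting labels or the
   total wrapping cost.  Hence, row after row, the chain of L-labelled balls
   issued from the leftmost top ball can be paired first: maj M is the wrapping
   cost of this chain plus maj of M with the chain removed.  In the column word
   the cyclic search for the next smaller letter is exactly the cyclic search
   for the partner in the row below, so the chain is the first charge subword
   of cw M, and the pairing from row i+1 to row i wraps precisely when i lies
   left of i+1 in that subword, both contributing L - i.  Removing the chain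
   from M removes the subword from cw M, and induction concludes. *)

From mathcomp Require Import all_boot zify.
Set Implicit Arguments. Unset Strict Implicit. Unset Printing Implicit Defensive.

Lemma sorted_head_leq (s : seq nat) e : sorted leq s -> e \in s -> head 0 s <= e.
Proof.
case: s => [|a s] //= Hs; rewrite inE => /predU1P[-> //|He].
by have /allP := order_path_min leq_trans Hs; apply.
Qed.

Lemma sorted_index_lt (T : eqType) (lt : rel T) (s : seq T) x y :
  transitive lt -> irreflexive lt -> sorted lt s -> x \in s -> y \in s ->
  lt x y = (index x s < index y s).
Proof.
move=> lt_tr lt_irr Hs Hx Hy.
case: ltngtP => [Hxy|Hyx|Exy]; first exact: (sorted_ltn_index lt_tr Hs).
  have Hyx' : lt y x by apply: (sorted_ltn_index lt_tr Hs).
  by apply/negbTE/negP => Hxy; move: (lt_irr x); rewrite (lt_tr y x x Hxy Hyx').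
by rewrite -(nth_index x Hx) -(nth_index x Hy) Exy lt_irr.
Qed.

Lemma filter_nth_iota (T : Type) (x0 : T) (s : seq T) (P : pred T) :
  [seq nth x0 s q | q <- [seq q <- iota 0 (size s) | P (nth x0 s q)]] = filter P s.
Proof. by rewrite -[in RHS](mkseq_nth x0 s) /mkseq filter_map. Qed.

Lemma filter_iota_index (T : eqType) (x0 : T) (s : seq T) (P : pred T) : uniq s ->
  [seq q <- iota 0 (size s) | P (nth x0 s q)] = [seq index x s | x <- s & P x].
Proof.
move=> Hs; rewrite -(filter_nth_iota x0 s P) -map_comp -[LHS]map_id.
by apply/eq_in_map => q; rewrite mem_filter mem_iota => /and3P[_ _ Hq] /=; rewrite index_uniq.
Qed.

Lemma index_filter_iota (T : eqType) (x0 : T) (s : seq T) x :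
  index x s = head (size s) [seq q <- iota 0 (size s) | nth x0 s q == x].
Proof.
elim: s => [|y s IH] //=; case: eqP => // _.
rewrite -[1]/(1 + 0) iotaDl filter_map IH.
by case: [seq q <- iota 0 (size s) | _].
Qed.

Lemma rev_iota1S l : rev (iota 1 l.+1) = l.+1 :: rev (iota 1 l).
Proof. by rewrite -[l.+1]addn1 iotaD rev_cat addn1. Qed.

Lemma all2_nth (S T : Type) (P : S -> T -> bool) s t x0 y0 i :
  all2 P s t -> i < size s -> P (nth x0 s i) (nth y0 t i).
Proof.
elim: s t i => [|a s IH] [|b t] [|i] //= /andP[Hab Hst] Hi //.
exact: IH.
Qed.

Definition next_cyc (s : seq nat) (c : nat) : nat :=
  head (head 0 s) [seq d <- s | c <= d].

Definition next_cyc_spec (s : seq nat) (c z : nat) : Prop :=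
  (c <= z /\ {in s, forall e, c <= e -> z <= e}) \/
  (z < c /\ {in s, forall e, e < c /\ z <= e}).

Lemma mem_next_cyc s c : s != [::] -> next_cyc s c \in s.
Proof.
rewrite /next_cyc; case: s => [|d0 s] // _.
case E: [seq d <- d0 :: s | c <= d] => [|y t] /=; first exact: mem_head.
by have := mem_head y t; rewrite -E mem_filter => /andP[].
Qed.

Lemma next_cycP s c : sorted leq s -> s != [::] -> next_cyc_spec s c (next_cyc s c).
Proof.
move=> Hs Hn; rewrite /next_cyc /next_cyc_spec.
case E: [seq d <- s | c <= d] => [|y t] /=.
  have lt_c e : e \in s -> e < c.
    move=> He; rewrite ltnNge; apply/negP => Hce.
    by move: (mem_filter (fun d => c <= d) e s); rewrite E He Hce in_nil.
  right; split; first by apply: lt_c; case: s Hn {Hs E} => //= ? ?; rewrite mem_head.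
  by move=> e He; rewrite lt_c //; split; last exact: sorted_head_leq.
have Hsf : sorted leq (y :: t) by rewrite -E sorted_filter //; apply: leq_trans.
have := mem_head y t; rewrite -{1}E mem_filter => /andP[Hcy _].
left; split=> // e He Hce; apply: sorted_head_leq Hsf _.
by rewrite -E mem_filter Hce.
Qed.

Lemma next_cyc_eq s c z :
  sorted leq s -> z \in s -> next_cyc_spec s c z -> next_cyc s c = z.
Proof.
move=> Hs Hz Hspec; have Hn : s != [::] by case: s Hz {Hs Hspec}.
have := next_cycP c Hs Hn; have := mem_next_cyc c Hn.
move: (next_cyc s c) => y Hy.
case: Hspec => [[H1 H2]|[H1 H2]] [[H3 H4]|[H3 H4]].
- by have := H2 y Hy H3; have := H4 z Hz H1; lia.
- by have := H4 z Hz; lia.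
- by have := H2 y Hy; lia.
- by have := H2 y Hy; have := H4 z Hz; lia.
Qed.

Lemma eq_next_cyc s c1 c2 :
  {in s, forall e, (c1 <= e) = (c2 <= e)} -> next_cyc s c1 = next_cyc s c2.
Proof. by move=> H; rewrite /next_cyc (eq_in_filter H). Qed.

Lemma next_cyc_rem s c x : sorted leq s -> s != [::] -> next_cyc s c != x ->
  next_cyc [seq d <- s | d != x] c = next_cyc s c.
Proof.
move=> Hs Hn Hx; apply: next_cyc_eq.
- by apply: sorted_filter => //; apply: leq_trans.
- by rewrite mem_filter Hx mem_next_cyc.
case: (next_cycP c Hs Hn) => [[H1 H2]|[H1 H2]]; [left|right]; split=> // e;
  by rewrite mem_filter => /andP[_]; apply: H2.
Qed.

Lemma next_cyc_rem_target s c z : sorted leq s -> s != [::] -> next_cyc s c = z ->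
  next_cyc [seq d <- s | d != z] c = next_cyc [seq d <- s | d != z] z.+1.
Proof.
move=> Hs Hn Hz; have := next_cycP c Hs Hn; rewrite Hz => -[[H1 H2]|[H1 H2]].
  apply: eq_next_cyc => e; rewrite mem_filter => /andP[Hez HeS].
  by have := H2 e HeS; move: Hez => /eqP; lia.
rewrite /next_cyc (eq_in_filter (a1 := fun d => c <= d) (a2 := pred0)); last first.
  by move=> e; rewrite mem_filter => /andP[_ /H2 []]; rewrite ltnNge => /negbTE.
rewrite (eq_in_filter (a1 := fun d => z < d) (a2 := predT)) ?filter_pred0 ?filter_predT.
  by case: [seq d <- s | d != z].
by move=> e; rewrite mem_filter => /andP[Hez /H2 [_]] /=; move: Hez => /eqP; lia.
Qed.

(* The fold body of [step], verbatim.  A state is the labelling of the lower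
   row (0 for a free ball) with the cost accumulated so far; [up c] is the
   label of the upper ball [c]. *)
Definition pair_ball (T : seq nat) (r : nat) (up : nat -> nat)
    (st : (nat -> nat) * nat) (c : nat) : (nat -> nat) * nat :=
  let low := st.1 in
  let cand := [seq d <- T | low d == 0] in
  match cand with
  | [::] => st
  | d0 :: _ =>
    let d := head d0 [seq d <- cand | c <= d] in
    ((fun x => if x == d then up c else low x),
     st.2 + (if d < c then up c - r + 1 else 0))
  end.

Definition pair_balls T r up st (s : seq nat) := foldl (pair_ball T r up) st s.

Definition free (T : seq nat) (st : (nat -> nat) * nat) := [seq d <- T | st.1 d == 0].

Definition update (f : nat -> nat) d u := fun x => if x == d then u else f x.

Definition wrap_cost r u (d c : nat) := if d < c then u - r + 1 else 0.

Lemma pair_ball_free T r up st c : free T st != [::] ->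
  pair_ball T r up st c = (update st.1 (next_cyc (free T st) c) (up c),
                           st.2 + wrap_cost r (up c) (next_cyc (free T st) c) c).
Proof. by rewrite /pair_ball /free /next_cyc; case: [seq d <- T | st.1 d == 0]. Qed.

Lemma pair_ball_full T r up st c : free T st = [::] -> pair_ball T r up st c = st.
Proof. by rewrite /pair_ball /free => ->. Qed.

Lemma free_update T f k d u : u != 0 ->
  free T (update f d u, k) = [seq x <- free T (f, k) | x != d].
Proof.
move=> Hu; rewrite /free -filter_predI; apply: eq_filter => x /=.
by rewrite /update; case: (eqVneq x d) => [->|_]; rewrite ?eqxx //=; apply: negbTE.
Qed.

Lemma update_comm f x y u : update (update f x u) y u =1 update (update f y u) x u.
Proof. by move=> z; rewrite /update; case: (z == x); case: (z == y). Qed.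

Lemma free_sorted T st : sorted ltn T -> uniq (free T st) /\ sorted leq (free T st).
Proof.
by move=> HT; apply/andP; rewrite -ltn_sorted_uniq_leq; apply: (sorted_filter ltn_trans).
Qed.

Definition eq_state (a b : (nat -> nat) * nat) := a.1 =1 b.1 /\ a.2 = b.2.

Lemma eq_state_trans a b c : eq_state a b -> eq_state b c -> eq_state a c.
Proof. by move=> [H1 H2] [H3 H4]; split => [x|]; rewrite ?H1 ?H3 ?H2 ?H4. Qed.

Lemma free_eq_state T a b : eq_state a b -> free T a = free T b.
Proof. by move=> [H _]; apply: eq_filter => x; rewrite H. Qed.

Lemma pair_balls_eq_state T r up s a b :
  eq_state a b -> eq_state (pair_balls T r up a s) (pair_balls T r up b s).
Proof.
elim: s a b => [|c s IH] a b Hab //=; apply: IH.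
have E := free_eq_state T Hab; case Ea: (free T a) => [|d0 t].
  by rewrite !pair_ball_full // -E.
rewrite !pair_ball_free -?E ?Ea //.
by case: Hab => H1 H2; split => [x|] /=; rewrite ?H2 // /update H1.
Qed.

Lemma free_pair_ball T r up st c : sorted ltn T -> free T st != [::] -> 0 < up c ->
  free T (pair_ball T r up st c) = [seq d <- free T st | d != next_cyc (free T st) c] /\
  size (free T (pair_ball T r up st c)) = (size (free T st)).-1.
Proof.
move=> HT Hn Hu; rewrite pair_ball_free // free_update -?lt0n //; split=> //.
have [Huniq _] := free_sorted st HT.
by rewrite -rem_filter // size_rem // mem_next_cyc.
Qed.

Lemma wrap_count_same_target F a b : sorted leq F -> F != [::] ->
  next_cyc F a = next_cyc F b -> [seq d <- F | d != next_cyc F a] != [::] ->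
  let x := next_cyc F a in let w := next_cyc [seq d <- F | d != x] a in
  (x < a) + (w < b) = (x < b) + (w < a).
Proof.
move=> Hs Hn Hab Hn' x w.
have Hw : next_cyc [seq d <- F | d != x] b = w.
  by rewrite /w !(next_cyc_rem_target Hs Hn) // -Hab.
have := mem_next_cyc a Hn'; rewrite -/w mem_filter => /andP[/eqP Hwx HwF].
have := next_cycP a Hs Hn; have := next_cycP b Hs Hn; rewrite -/x -Hab.
move=> [[H1 H2]|[H1 H2]] [[H3 H4]|[H3 H4]];
  have := H2 w HwF; have := H4 w HwF; lia.
Qed.

Lemma wrap_costE r u d c : wrap_cost r u d c = (d < c) * (u - r + 1).
Proof. by rewrite /wrap_cost; case: (d < c); rewrite ?mul1n. Qed.

Lemma pair_ball_comm T r up st a b : sorted ltn T -> 1 < size (free T st) ->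
  up a = up b -> 0 < up a ->
  eq_state (pair_ball T r up (pair_ball T r up st a) b)
           (pair_ball T r up (pair_ball T r up st b) a).
Proof.
move=> HT Hsz Hab Hu; have [Huniq Hs] := free_sorted st HT.
have Hn : free T st != [::] by rewrite -size_eq0 -lt0n ltnW.
have [Ea Sa] := free_pair_ball r (c := a) HT Hn Hu.
have Hub : 0 < up b by rewrite -Hab.
have [Eb Sb] := free_pair_ball r (c := b) HT Hn Hub.
have Hna : free T (pair_ball T r up st a) != [::] by rewrite -size_eq0 Sa; lia.
have Hnb : free T (pair_ball T r up st b) != [::] by rewrite -size_eq0 Sb; lia.
rewrite (pair_ball_free _ _ _ Hna) (pair_ball_free _ _ _ Hnb) Ea Eb.
rewrite [pair_ball _ _ _ st a]pair_ball_free // [pair_ball _ _ _ st b]pair_ball_free //=.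
rewrite -Hab; set F := free T st in Hn Hs Hna Ea *.
set x := next_cyc F a; set y := next_cyc F b.
have [Exy|Hxy] := eqVneq x y.
  have Ew : next_cyc [seq d <- F | d != x] b = next_cyc [seq d <- F | d != x] a.
    by rewrite !(next_cyc_rem_target Hs Hn) // -Exy.
  rewrite -Exy Ew; split=> //=; rewrite -!addnA; congr (_ + _).
  rewrite !wrap_costE -!mulnDl (wrap_count_same_target Hs Hn) //.
  by rewrite -Ea.
have -> : next_cyc [seq d <- F | d != x] b = y by apply: next_cyc_rem => //; rewrite eq_sym.
have -> : next_cyc [seq d <- F | d != y] a = x by apply: next_cyc_rem.
by split=> /=; [apply: update_comm | rewrite addnAC].
Qed.

Lemma pair_balls_rcons T r up st s x : sorted ltn T ->
  all (fun y => up y == up x) s -> 0 < up x -> size s < size (free T st) ->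
  eq_state (pair_balls T r up st (rcons s x))
           (pair_balls T r up (pair_ball T r up st x) s).
Proof.
move=> HT; elim: s st => [|y s IH] st //= /andP[/eqP Hy Hall] Hx Hsz.
have Hn : free T st != [::] by rewrite -size_eq0 -lt0n (leq_trans _ Hsz).
have Hy0 : 0 < up y by rewrite Hy.
have [_ Sy] := free_pair_ball r (c := y) HT Hn Hy0.
apply: eq_state_trans (IH _ Hall Hx _) _; first by rewrite Sy; lia.
by apply: pair_balls_eq_state; apply: pair_ball_comm; rewrite ?Hy //; lia.
Qed.

Lemma pair_balls_move_first T r up st s1 x s2 : sorted ltn T ->
  all (fun y => up y == up x) s1 -> 0 < up x -> size s1 < size (free T st) ->
  eq_state (pair_balls T r up st (s1 ++ x :: s2))
           (pair_balls T r up (pair_ball T r up st x) (s1 ++ s2)).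
Proof.
move=> HT Hs1 Hx Hsz; rewrite /pair_balls -cat_rcons !foldl_cat.
by apply: pair_balls_eq_state; apply: pair_balls_rcons.
Qed.

Lemma pair_balls_taken T r up s st1 st2 d :
  {in predC1 d, st1.1 =1 st2.1} -> st1.1 d != 0 ->
  let res1 := pair_balls T r up st1 s in
  let res2 := pair_balls [seq x <- T | x != d] r up st2 s in
  [/\ {in predC1 d, res1.1 =1 res2.1}, res1.1 d = st1.1 d & res1.2 + st2.2 = res2.2 + st1.2].
Proof.
elim: s st1 st2 => [|c s IH] st1 st2 H1 H2 /=; first by rewrite addnC.
have Efree : free T st1 = free [seq x <- T | x != d] st2.
  rewrite /free -filter_predI; apply: eq_filter => x /=.
  by case: (eqVneq x d) => [->|Hx]; rewrite ?eqxx ?andbF ?andbT ?(negbTE H2) // H1 // inE.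
case E: (free T st1) => [|d0 t].
  by rewrite !pair_ball_full -?Efree //; apply: IH.
have Hn : free T st1 != [::] by rewrite E.
rewrite (pair_ball_free _ _ _ Hn) pair_ball_free -?Efree //.
set x := next_cyc _ c.
have Hdx : (d == x) = false.
  apply/negbTE/eqP => Edx; move: (mem_next_cyc c Hn).
  by rewrite -/x -Edx mem_filter (negbTE H2).
set k := wrap_cost r (up c) x c.
have Hupd : {in predC1 d, update st1.1 x (up c) =1 update st2.1 x (up c)}.
  by move=> y Hy; rewrite /update H1.
have Hupd_d : update st1.1 x (up c) d != 0 by rewrite /update Hdx.
have [IH1 IH2 IH3] := IH (update st1.1 x (up c), st1.2 + k)
                         (update st2.1 x (up c), st2.2 + k) Hupd Hupd_d.
split=> //; first by rewrite IH2 /= /update Hdx.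
by move: IH3 => /=; lia.
Qed.

Lemma eq_in_pair_balls T r up up' st s : {in s, up =1 up'} ->
  pair_balls T r up st s = pair_balls T r up' st s.
Proof.
elim: s st => [|c s IH] st //= Hup.
have -> : pair_ball T r up st c = pair_ball T r up' st c by rewrite /pair_ball Hup ?mem_head.
by apply: IH => y Hy; apply: Hup; rewrite inE Hy orbT.
Qed.

Lemma pair_balls_label_le T r up st s B :
  (forall x, st.1 x <= B) -> {in s, forall c, up c <= B} ->
  forall x, (pair_balls T r up st s).1 x <= B.
Proof.
elim: s st => [|c s IH] st //= Hst Hs; apply: IH => [x|y Hy]; last first.
  by apply: Hs; rewrite inE Hy orbT.
rewrite /pair_ball; case: [seq d <- T | st.1 d == 0] => //= d0 t.
by case: ifP => _; [apply: Hs; rewrite mem_head | apply: Hst].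
Qed.

Definition upper_label (lab : nat -> nat) (r c : nat) := if lab c == 0 then r else lab c.

Definition label_order (up : nat -> nat) : rel nat :=
  fun a b => (up b < up a) || ((up a == up b) && (a <= b)).

Definition pair_row (S T : seq nat) (r : nat) (lab : nat -> nat) :=
  pair_balls T r (upper_label lab r) ((fun _ => 0), 0)
             (sort (label_order (upper_label lab r)) S).

Lemma label_order_trans up : transitive (label_order up).
Proof.
move=> b a c; rewrite /label_order.
case/orP=> [H1|/andP[/eqP H1 H2]] /orP[H3|/andP[/eqP H3 H4]].
- by rewrite (ltn_trans H3 H1).
- by rewrite -H3 H1.
- by rewrite H1 H3.
- by rewrite H1 H3 eqxx (leq_trans H2 H4) orbT.
Qed.

Lemma label_order_total up : total (label_order up).
Proof.
move=> a b; rewrite /label_order.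
by case: (ltngtP (up a) (up b)) => //= _; apply: leq_total.
Qed.

Lemma label_order_anti up : antisymmetric (label_order up).
Proof.
move=> a b; rewrite /label_order; case: (ltngtP (up a) (up b)) => //= _.
by rewrite -eqn_leq => /eqP.
Qed.

Lemma sort_label_order_max up S c : c \in S -> {in S, forall x, up x <= up c} ->
  exists s1 s2, sort (label_order up) S = s1 ++ c :: s2 /\
                all (fun y => up y == up c) s1.
Proof.
move=> Hc Hmax; set o := sort _ S; set i := index c o.
have Hco : c \in o by rewrite mem_sort.
have Eo : o = take i o ++ c :: drop i.+1 o.
  by rewrite -{1}(cat_take_drop i o) (drop_nth c) ?index_mem ?nth_index.
exists (take i o), (drop i.+1 o); split=> //; apply/allP => y Hy.
have : sorted (label_order up) o by apply: sort_sorted; apply: label_order_total.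
rewrite Eo (sorted_pairwise (@label_order_trans up)) pairwise_cat.
case/and3P=> /allrelP/(_ y c Hy (mem_head _ _)) + _ _; rewrite /label_order.
have HyS : y \in S by rewrite -(mem_sort (label_order up)) -/o Eo mem_cat Hy.
by rewrite ltnNge Hmax //= => /andP[].
Qed.

Lemma sort_label_order_rem up up' S c s1 s2 : uniq S ->
  sort (label_order up) S = s1 ++ c :: s2 -> {in rem c S, up' =1 up} ->
  sort (label_order up') (rem c S) = s1 ++ s2.
Proof.
move=> HS Eo Hup.
have Hc : c \in S by rewrite -(mem_sort (label_order up)) Eo mem_cat mem_head orbT.
have Hperm : perm_eq (rem c S) (s1 ++ s2).
  rewrite -(perm_cons c); apply: (@perm_trans _ S); first by rewrite perm_sym perm_to_rem.
  by rewrite -(perm_sort (label_order up)) Eo -[c :: s2]cat1s perm_catCA.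
have Hord : {in rem c S &, label_order up' =2 label_order up}.
  by move=> a b Ha Hb; rewrite /label_order !Hup.
apply: (sorted_eq (@label_order_trans up) (@label_order_anti up)); last first.
- by rewrite perm_sort.
- apply: (subseq_sorted (@label_order_trans up) _ (sort_sorted (@label_order_total up) S)).
  by rewrite Eo cat_subseq // subseq_cons.
rewrite -(eq_in_sorted Hord); last by apply/allP => x; rewrite mem_sort.
exact: sort_sorted (@label_order_total up') _.
Qed.

Lemma upper_label_gt0 lab r c : 0 < r -> 0 < upper_label lab r c.
Proof. by move=> Hr; rewrite /upper_label; case: eqP => // /eqP; rewrite lt0n. Qed.

(* Balls of equal label commute, so a ball of maximal label can be paired first. *)
Lemma pair_row_max S T r lab lab' c :
  sorted ltn S -> sorted ltn T -> size S <= size T -> c \in S -> 0 < r ->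
  {in S, forall x, upper_label lab r x <= upper_label lab r c} ->
  {in S, forall x, x != c -> lab' x = lab x} ->
  let L := upper_label lab r c in let c' := next_cyc T c in
  let res := pair_row S T r lab in
  let res' := pair_row (rem c S) (rem c' T) r lab' in
  [/\ res.2 = res'.2 + wrap_cost r L c' c, res.1 c' = L,
      {in predC1 c', res.1 =1 res'.1} & forall x, res.1 x <= L].
Proof.
move=> HS HT HST Hc Hr Hmax Hlab L c' res res'.
set up := upper_label lab r; pose st0 : (nat -> nat) * nat := ((fun _ => 0), 0).
have HL : 0 < L := upper_label_gt0 lab c Hr.
have HSu : uniq S by move: HS; rewrite ltn_sorted_uniq_leq => /andP[].
have HTu : uniq T by move: HT; rewrite ltn_sorted_uniq_leq => /andP[].
have [s1 [s2 [Eo Hall]]] := sort_label_order_max Hc Hmax.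
have Hfree0 : free T st0 = T by apply/all_filterP/allP.
have Hsz1 : size s1 < size (free T st0).
  rewrite Hfree0 (leq_trans _ HST) // -(size_sort (label_order up) S) Eo size_cat /=.
  by rewrite addnS ltnS leq_addr.
have Hn : free T st0 != [::] by rewrite -size_eq0 -lt0n (leq_ltn_trans _ Hsz1).
have [Hm1 Hm2] := pair_balls_move_first r s2 HT Hall HL Hsz1.
rewrite pair_ball_free // Hfree0 -/c' in Hm1 Hm2.
have Hother : {in predC1 c', update st0.1 c' L =1 st0.1}.
  by move=> x; rewrite inE /update => /negbTE ->.
have Htaken : update st0.1 c' L c' != 0 by rewrite /update eqxx -lt0n.
have [Ht1 Ht2 Ht3] := pair_balls_taken T r up (s1 ++ s2)
  (st1 := (update st0.1 c' L, st0.2 + wrap_cost r L c' c)) (st2 := st0) Hother Htaken.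
have Eres : res = pair_balls T r up st0 (s1 ++ c :: s2) by rewrite -Eo.
have Eres' : res' = pair_balls [seq x <- T | x != c'] r up st0 (s1 ++ s2).
  have Hup' : {in rem c S, upper_label lab' r =1 up}.
    by move=> x; rewrite mem_rem_uniq // => /andP[Hxc HxS]; rewrite /up /upper_label Hlab.
  have Esort := sort_label_order_rem HSu Eo Hup'.
  rewrite /res' /pair_row Esort -rem_filter //.
  apply: eq_in_pair_balls => x Hx; apply: Hup'.
  by rewrite -(mem_sort (label_order (upper_label lab' r))) Esort.
split.
- by move: Ht3; rewrite -Eres' -Hm2 -Eres /= addn0 => ->.
- by rewrite Eres Hm1 Ht2 /= /update eqxx.
- by move=> x Hx; rewrite Eres Hm1 Ht1 // Eres'.
- apply: pair_balls_label_le => // x; rewrite mem_sort; exact: Hmax.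
Qed.

Fixpoint maj_rows (R : nat -> seq nat) (r : nat) (lab : nat -> nat) : nat :=
  match r with
  | S ((S _) as r0) => let p := pair_row (R r) (R r.-1) r lab in p.2 + maj_rows R r0 p.1
  | _ => 0
  end.

Lemma maj_rowsS R r lab : maj_rows R r.+2 lab =
  (pair_row (R r.+2) (R r.+1) r.+2 lab).2 +
  maj_rows R r.+1 (pair_row (R r.+2) (R r.+1) r.+2 lab).1.
Proof. by []. Qed.

Lemma majrec_rows n (M : seq {set 'I_n}) r lab : majrec M r lab = maj_rows (cols M) r lab.
Proof.
elim: r lab => [|[|r] IH] lab //.
by rewrite maj_rowsS -IH.
Qed.

Fixpoint chain_at_depth (R : nat -> seq nat) (L k : nat) : nat :=
  if k is k'.+1 then next_cyc (R (L - k)) (chain_at_depth R L k') else head 0 (R L).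

(* The columns, row by row, of the chain of pairings issued from the leftmost
   ball of the top row [L]. *)
Definition chain_col R L r := chain_at_depth R L (L - r).

Lemma chain_col_top R L : chain_col R L L = head 0 (R L).
Proof. by rewrite /chain_col subnn. Qed.

Lemma chain_col_step R L r : 0 < r < L ->
  chain_col R L r = next_cyc (R r) (chain_col R L r.+1).
Proof.
move=> Hr; rewrite /chain_col.
have -> : L - r = (L - r.+1).+1 by lia.
by rewrite /=; congr (next_cyc (R _)); lia.
Qed.

Definition rows_rem_chain R L r :=
  if 0 < r <= L then rem (chain_col R L r) (R r) else R r.

Definition chain_wrap_cost R L r :=
  wrap_cost r L (chain_col R L r.-1) (chain_col R L r).

Section ChainRemoval.
Variables (R : nat -> seq nat) (L : nat).
Hypothesis sorted_R : forall r, sorted ltn (R r).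
Hypothesis size_R : forall r, 0 < r < L -> size (R r.+1) <= size (R r).
Hypothesis top_R : R L != [::].

Lemma size_row_le r r' : 0 < r -> r <= r' <= L -> size (R r') <= size (R r).
Proof.
move=> Hr; elim: r' => [|r' IH] /andP[Hrr' Hr'L]; first by case: r Hr Hrr'.
case: (ltngtP r r'.+1) Hrr' => [Hlt|//|<-//] _.
have Hr' : 0 < r' < L by lia.
by apply: (leq_trans (size_R Hr')); apply: IH; lia.
Qed.

Lemma row_nonempty r : 0 < r <= L -> R r != [::].
Proof.
move=> /andP[Hr HrL]; rewrite -size_eq0 -lt0n.
have : size (R L) <= size (R r) by apply: size_row_le; rewrite // HrL leqnn.
by apply: leq_trans; rewrite lt0n size_eq0.
Qed.

Lemma chain_col_mem r : 0 < r <= L -> chain_col R L r \in R r.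
Proof.
move=> /andP[Hr HrL]; case: (ltngtP r L) HrL => [HrL|//|->] _.
  by rewrite chain_col_step ?Hr //; apply/mem_next_cyc/row_nonempty; rewrite Hr ltnW.
by rewrite chain_col_top; case: (R L) top_R => // ? ?; rewrite mem_head.
Qed.

Lemma rows_rem_chainE r : 0 < r <= L -> rows_rem_chain R L r = rem (chain_col R L r) (R r).
Proof. by rewrite /rows_rem_chain => ->. Qed.

Lemma sorted_rows_rem_chain r : sorted ltn (rows_rem_chain R L r).
Proof.
rewrite /rows_rem_chain; case: ifP => _ //.
have := sorted_R r; rewrite ltn_sorted_uniq_leq => /andP[HRu _].
by rewrite rem_filter //; apply: (sorted_filter ltn_trans); apply: sorted_R.
Qed.

Lemma rows_rem_chain_sub r : {subset rows_rem_chain R L r <= R r}.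
Proof. by rewrite /rows_rem_chain; case: ifP => _ // x /mem_rem. Qed.

Lemma size_rows_rem_chain r : 0 < r < L ->
  size (rows_rem_chain R L r.+1) <= size (rows_rem_chain R L r).
Proof.
move=> Hr; rewrite !rows_rem_chainE; try lia.
by rewrite !size_rem ?chain_col_mem -?subn1 ?leq_sub2r ?size_R //; lia.
Qed.

Lemma maj_rows_rem_chain r lab lab' : 0 < r <= L ->
  upper_label lab r (chain_col R L r) = L ->
  {in R r, forall x, upper_label lab r x <= L} ->
  {in R r, forall x, x != chain_col R L r -> lab' x = lab x} ->
  maj_rows R r lab =
    \sum_(2 <= i < r.+1) chain_wrap_cost R L i + maj_rows (rows_rem_chain R L) r lab'.
Proof.
elim: r lab lab' => [|[|r] IH] lab lab' // Hr Hup Hle Hlab; first by rewrite big_geq.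
have Hr1 : 0 < r.+1 <= L by lia.
have Hnext : chain_col R L r.+1 = next_cyc (R r.+1) (chain_col R L r.+2).
  by apply: chain_col_step; lia.
have Hmax : {in R r.+2, forall x, upper_label lab r.+2 x <=
                                  upper_label lab r.+2 (chain_col R L r.+2)}.
  by rewrite Hup.
have HST : size (R r.+2) <= size (R r.+1) by apply: size_R; lia.
have [E1 E2 E3 E4] := pair_row_max (sorted_R _) (sorted_R _) HST (chain_col_mem Hr)
                                   (isT : 0 < r.+2) Hmax Hlab.
rewrite Hup -Hnext in E1 E2 E3 E4.
rewrite !maj_rowsS !rows_rem_chainE // E1.
have HL : 0 < L by lia.
set res' := pair_row (rem _ (R r.+2)) _ r.+2 lab'.
rewrite (IH _ res'.1) //.
- by rewrite [in RHS]big_nat_recr //= [chain_wrap_cost _ _ r.+2]/chain_wrap_cost /=; lia.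
- by rewrite /upper_label E2 (negbTE (lt0n_neq0 HL)).
- by move=> x _; rewrite /upper_label; case: eqP => _; [lia | apply: E4].
- by move=> x _ Hx; rewrite E3.
Qed.
End ChainRemoval.

(* A cell is a pair (column, row); the reading order of [cw] is [reading_lt]. *)
Definition reading_lt (x y : nat * nat) := (x.1 < y.1) || ((x.1 == y.1) && (y.2 < x.2)).

Lemma reading_lt_trans : transitive reading_lt.
Proof.
move=> [b1 b2] [a1 a2] [c1 c2]; rewrite /reading_lt /=.
case/orP=> [H1|/andP[/eqP E1 H1]] /orP[H2|/andP[/eqP E2 H2]].
- by rewrite (ltn_trans H1 H2).
- by rewrite -E2 H1.
- by rewrite E1 H2.
- by rewrite E1 E2 eqxx (ltn_trans H2 H1) orbT.
Qed.

Lemma reading_lt_irr : irreflexive reading_lt.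
Proof. by move=> [a b]; rewrite /reading_lt /= ltnn eqxx ltnn. Qed.

Definition cells n L (R : nat -> seq nat) : seq (nat * nat) :=
  flatten [seq [seq (j, r) | r <- [seq r <- rev (iota 1 L) | j \in R r]] | j <- iota 0 n].

Definition word n L R := map snd (cells n L R).

Lemma cw_word n (M : seq {set 'I_n}) : cw M = word n (size M) (cols M).
Proof.
rewrite /cw /word /cells map_flatten -val_enum_ord -!map_comp.
congr flatten; apply: eq_map => j /=; rewrite -map_comp map_id.
by apply: eq_filter => r; rewrite /cols (mem_map val_inj) mem_filter mem_enum andbT.
Qed.

Lemma mem_cells n L R j r :
  ((j, r) \in cells n L R) = [&& j < n, 0 < r <= L & j \in R r].
Proof.
apply/flatten_mapP/and3P => [[j' Hj' /mapP[r' Hr' [-> ->]]]|[Hj Hr HjR]].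
  move: Hj' Hr'; rewrite mem_iota mem_filter mem_rev mem_iota => Hj' /andP[HR Hr'].
  by split=> //; lia.
exists j; first by rewrite mem_iota.
by apply: map_f; rewrite mem_filter HjR mem_rev mem_iota; lia.
Qed.

Lemma cells_sorted n L R : sorted reading_lt (cells n L R).
Proof.
rewrite sorted_pairwise; last exact: reading_lt_trans.
rewrite /cells; elim: (iota 0 n) (iota_ltn_sorted 0 n) => [|j s IH] //= Hs.
rewrite pairwise_cat IH ?andbT; last exact: path_sorted Hs.
apply/andP; split.
  apply/allrelP => x y /mapP[r _ ->] /flatten_mapP[j' Hj' /mapP[r' _ ->]].
  by rewrite /reading_lt /= (allP (order_path_min ltn_trans Hs)).
have gtn_trans : transitive (fun a b : nat => b < a).
  by move=> b a c Hab Hbc; apply: ltn_trans Hbc Hab.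
have : sorted (fun a b => b < a) [seq r <- rev (iota 1 L) | j \in R r].
  by apply: sorted_filter => //; rewrite rev_sorted iota_ltn_sorted.
rewrite sorted_pairwise // pairwise_map; apply: sub_pairwise => a b.
by rewrite /reading_lt /= ltnn eqxx.
Qed.

Lemma cells_uniq n L R : uniq (cells n L R).
Proof.
by apply: (@sorted_uniq _ reading_lt reading_lt_trans reading_lt_irr); apply: cells_sorted.
Qed.

Section Word.
Variables (n L : nat) (R : nat -> seq nat).
Hypothesis sorted_R : forall r, sorted ltn (R r).
Hypothesis bound_R : forall r j, j \in R r -> j < n.

Local Notation cs := (cells n L R).
Local Notation w := (word n L R).
Local Notation pos v := (index v (cells n L R)).

Lemma cells_row l : 0 < l <= L -> [seq v <- cs | v.2 == l] = [seq (j, l) | j <- R l].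
Proof.
move=> Hl; apply: (irr_sorted_eq reading_lt_trans reading_lt_irr).
- by apply: sorted_filter; [apply: reading_lt_trans | apply: cells_sorted].
- rewrite sorted_map; apply: sub_sorted (sorted_R l) => a b Hab.
  by rewrite /reading_lt /= [a < b]Hab.
move=> [j r]; rewrite mem_filter mem_cells /=; apply/idP/mapP.
  by move=> /andP[/eqP -> /and3P[_ _ Hj]]; exists j.
by move=> [j' Hj' [-> ->]]; rewrite eqxx Hl Hj' (bound_R Hj').
Qed.

Lemma word_positions l : 0 < l <= L ->
  [seq q <- iota 0 (size w) | nth 0 w q == l] = [seq pos (j, l) | j <- R l].
Proof.
move=> Hl; rewrite size_map.
rewrite (eq_in_filter (a2 := fun q => (nth (0, 0) cs q).2 == l)); last first.
  by move=> q; rewrite mem_iota => /andP[_ Hq]; rewrite (nth_map (0, 0)).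
rewrite (filter_iota_index (0, 0) (fun v => v.2 == l)) ?cells_uniq //.
by rewrite cells_row // -map_comp.
Qed.

Lemma index_word_top : 0 < L -> R L != [::] -> index L w = pos (head 0 (R L), L).
Proof.
move=> HL HRL; rewrite (index_filter_iota 0) word_positions ?HL ?leqnn //.
by case: (R L) HRL.
Qed.

Lemma next_occ_word l c : 0 < l < L -> R l != [::] -> (c, l.+1) \in cs ->
  next_occ w l (pos (c, l.+1)) = pos (next_cyc (R l) c, l).
Proof.
move=> Hl HRl Hc; rewrite /next_occ word_positions; last by lia.
rewrite filter_map (eq_in_filter (a2 := fun j => c <= j)); last first.
  move=> j Hj /=; rewrite -(sorted_index_lt reading_lt_trans reading_lt_irr)
    ?cells_sorted ?Hc ?mem_cells ?(bound_R Hj) ?Hj //; last by lia.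
  by rewrite /reading_lt /= ltnSn andbT orbC -leq_eqVlt.
by rewrite /next_cyc; case: [seq j <- R l | c <= j] => //=; case: (R l) HRl.
Qed.

End Word.

Definition chain_cells R L := [seq (chain_col R L r, r) | r <- rev (iota 1 L)].

Section ChainWord.
Variables (n L : nat) (R : nat -> seq nat).
Hypothesis sorted_R : forall r, sorted ltn (R r).
Hypothesis bound_R : forall r j, j \in R r -> j < n.
Hypothesis size_R : forall r, 0 < r < L -> size (R r.+1) <= size (R r).
Hypothesis top_R : R L != [::].

Local Notation cs := (cells n L R).
Local Notation w := (word n L R).
Local Notation pos v := (index v (cells n L R)).

Lemma chain_cell_mem r : 0 < r <= L -> (chain_col R L r, r) \in cs.
Proof.
move=> Hr; have Hc := chain_col_mem size_R top_R Hr.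
by rewrite mem_cells Hr Hc (bound_R Hc).
Qed.

Lemma mem_chain_cells j r :
  ((j, r) \in chain_cells R L) = (0 < r <= L) && (j == chain_col R L r).
Proof.
apply/mapP/andP => [[r' Hr' [-> ->]]|[Hr /eqP ->]]; last first.
  by exists r; rewrite // mem_rev mem_iota; lia.
by move: Hr'; rewrite mem_rev mem_iota; split => //; lia.
Qed.

Lemma chain_cells_sub : {subset chain_cells R L <= cs}.
Proof. by move=> [j r]; rewrite mem_chain_cells => /andP[Hr /eqP ->]; apply: chain_cell_mem. Qed.

Lemma maxletter_word : 0 < L -> maxletter w = L.
Proof.
move=> HL; have -> : maxletter w = \max_(x <- w) x.
  by elim: w => [|a s IH]; rewrite ?big_nil ?big_cons //= IH.
apply/eqP; rewrite eqn_leq; apply/andP; split.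
  by apply/bigmax_leqP_seq => _ /mapP[[j r] + ->] _; rewrite mem_cells => /and3P[_ /andP[]].
apply: (leq_bigmax_seq (F := id)) => //; apply/mapP.
by exists (chain_col R L L, L); rewrite // chain_cell_mem // HL leqnn.
Qed.

Lemma chain_positions l : l < L ->
  chain w l (pos (chain_col R L l.+1, l.+1)) =
  [seq pos (chain_col R L r, r) | r <- rev (iota 1 l)].
Proof.
elim: l => [|l IH] Hl //=.
have Hl1 : 0 < l.+1 < L by lia.
rewrite next_occ_word ?chain_cell_mem //; last by apply: (row_nonempty size_R top_R); lia.
by rewrite -(chain_col_step R Hl1) IH 1?ltnW // rev_iota1S.
Qed.

Lemma first_positions_word : 0 < L ->
  first_positions w = [seq pos v | v <- chain_cells R L].
Proof.
move=> HL; have ifS (A : Type) (a b : A) : (if L is 0 then a else b) = b by case: (L) HL.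
rewrite /first_positions /chain_cells maxletter_word // ifS index_word_top // -chain_col_top.
have HL1 : L.-1 < L by rewrite prednK.
have := chain_positions HL1; rewrite prednK // => ->.
have -> : rev (iota 1 L) = L :: rev (iota 1 L.-1).
  by rewrite -{1}(prednK HL) rev_iota1S prednK.
by rewrite -map_comp.
Qed.

Lemma select_word (Q : pred nat) (P : pred (nat * nat)) :
  (forall q, q < size cs -> Q q = P (nth (0, 0) cs q)) ->
  [seq nth 0 w q | q <- [seq q <- iota 0 (size w) | Q q]] = map snd (filter P cs).
Proof.
move=> HQ; rewrite size_map (eq_in_filter (a2 := fun q => P (nth (0, 0) cs q))); last first.
  by move=> q; rewrite mem_iota => /andP[_ /HQ].
rewrite -(filter_nth_iota (0, 0) cs P) -map_comp; apply/eq_in_map => q.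
by rewrite mem_filter mem_iota => /and3P[_ _ Hq] /=; rewrite (nth_map (0, 0)).
Qed.

Lemma mem_first_positions q : 0 < L -> q < size cs ->
  (q \in first_positions w) = (nth (0, 0) cs q \in chain_cells R L).
Proof.
move=> HL Hq; rewrite first_positions_word //; apply/mapP/idP => [[v Hv ->]|Hin].
  by rewrite nth_index // chain_cells_sub.
by exists (nth (0, 0) cs q); rewrite // index_uniq ?cells_uniq.
Qed.

Lemma charge_subword_word : 0 < L ->
  charge_subword w = map snd [seq v <- cs | v \in chain_cells R L].
Proof. by move=> HL; apply: select_word => q Hq; rewrite mem_first_positions. Qed.

Lemma cells_rem_chain :
  [seq v <- cs | v \notin chain_cells R L] = cells n L (rows_rem_chain R L).
Proof.
apply: (irr_sorted_eq reading_lt_trans reading_lt_irr).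
- by apply: sorted_filter; [apply: reading_lt_trans | apply: cells_sorted].
- exact: cells_sorted.
move=> [j r]; rewrite mem_filter !mem_cells mem_chain_cells /rows_rem_chain.
case Hr: (0 < r <= L); rewrite ?andbF //=.
rewrite mem_rem_uniq; last by have := sorted_R r; rewrite ltn_sorted_uniq_leq => /andP[].
by rewrite inE andbCA.
Qed.

Lemma charge_rest_word : 0 < L -> charge_rest w = word n L (rows_rem_chain R L).
Proof.
move=> HL; rewrite /word -cells_rem_chain; apply: select_word => q Hq.
by rewrite /= mem_first_positions.
Qed.

Lemma charge_perm_chain : 0 < L ->
  charge_perm (map snd [seq v <- cs | v \in chain_cells R L]) =
  \sum_(2 <= r < L.+1) chain_wrap_cost R L r.
Proof.
move=> HL; set u := [seq v <- cs | _].
have u_sorted : sorted reading_lt u.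
  by apply: sorted_filter; [apply: reading_lt_trans | apply: cells_sorted].
have mem_u : u =i chain_cells R L.
  by move=> v; rewrite mem_filter andb_idr //; apply: chain_cells_sub.
have size_u : size u = L.
  have chain_uniq : uniq (chain_cells R L).
    by rewrite map_inj_uniq ?rev_uniq ?iota_uniq // => a b [].
  have u_uniq : uniq u by apply: filter_uniq; apply: cells_uniq.
  by rewrite (perm_size (uniq_perm u_uniq chain_uniq mem_u)) size_map size_rev size_iota.
have index_u i : index i (map snd u) = index (chain_col R L i, i) u.
  rewrite /index find_map; apply: eq_in_find => -[j r].
  rewrite mem_u mem_chain_cells => /andP[_ /eqP ->] /=.
  by rewrite xpair_eqE; case: (eqVneq r i) => [->|]; rewrite ?eqxx ?andbF.
rewrite /charge_perm size_map size_u [in RHS]big_add1 /=.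
apply: eq_big_nat => i /andP[Hi1 HiL]; rewrite !index_u.
rewrite -(sorted_index_lt reading_lt_trans reading_lt_irr u_sorted); last 2 first.
- by rewrite mem_u mem_chain_cells eqxx andbT; lia.
- by rewrite mem_u mem_chain_cells eqxx andbT; lia.
rewrite /reading_lt /= [i.+1 < i]ltnNge leqnSn andbF orbF.
by rewrite /chain_wrap_cost /wrap_cost /=; case: ifP => //; lia.
Qed.

Lemma size_word_rem_chain : 0 < L -> size (word n L (rows_rem_chain R L)) < size w.
Proof.
move=> HL; rewrite /word !size_map -cells_rem_chain size_filter.
rewrite -(count_predC (mem (chain_cells R L)) cs) -[X in X < _]add0n ltn_add2r.
rewrite -has_count; apply/hasP; exists (chain_col R L L, L).
  by apply: chain_cell_mem; rewrite HL leqnn.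
by rewrite /= mem_chain_cells HL leqnn eqxx.
Qed.
End ChainWord.

Lemma word0 n R : word n 0 R = [::].
Proof. by rewrite /word /cells; elim: (iota 0 n). Qed.

Lemma charge_aux_nil f : charge_aux f [::] = 0.
Proof. by case: f. Qed.

Lemma charge_auxS f w : w != [::] ->
  charge_aux f.+1 w = charge_perm (charge_subword w) + charge_aux f (charge_rest w).
Proof. by case: w. Qed.

Lemma maj_rows_empty_top R L lab :
  R L.+1 = [::] -> maj_rows R L.+1 lab = maj_rows R L (fun _ => 0).
Proof. by case: L => [|L] // E; rewrite maj_rowsS E. Qed.

Lemma word_empty_top n R L : R L.+1 = [::] -> word n L.+1 R = word n L R.
Proof.
move=> E; rewrite /word /cells; congr (map snd (flatten _)); apply: eq_map => j.
by rewrite rev_iota1S /= E.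
Qed.

Lemma maj_rows_charge n L R f :
  (forall r, sorted ltn (R r)) -> (forall r j, j \in R r -> j < n) ->
  (forall r, 0 < r < L -> size (R r.+1) <= size (R r)) ->
  size (word n L R) <= f -> maj_rows R L (fun _ => 0) = charge_aux f (word n L R).
Proof.
have [m] := ubnP (L + size (word n L R)); elim: m L R f => // m IH.
move=> [|L] R f Hm sorted_R bound_R size_R Hf; rewrite ?word0 ?charge_aux_nil //.
have [HL|HL] := eqVneq (R L.+1) [::].
  rewrite maj_rows_empty_top // word_empty_top //.
  apply: IH => //.
  - by move: Hm; rewrite word_empty_top //; lia.
  - by move=> r Hr; apply: size_R; lia.
  - by rewrite -word_empty_top.
have Hlt := size_word_rem_chain sorted_R bound_R size_R HL (ltn0Sn L).
case: f Hf => [|f] Hf; first by lia.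
have Hw : word n L.+1 R != [::] by rewrite -size_eq0 -lt0n (leq_ltn_trans _ Hlt).
rewrite charge_auxS // charge_subword_word // charge_rest_word // charge_perm_chain //.
rewrite (maj_rows_rem_chain sorted_R size_R HL (r := L.+1) (lab' := fun _ => 0)) //.
- congr (_ + _); apply: IH; try lia.
  + exact: sorted_rows_rem_chain.
  + by move=> r j /rows_rem_chain_sub; apply: bound_R.
  + exact: size_rows_rem_chain.
- by rewrite leqnn.
Qed.

Lemma sorted_cols n (M : seq {set 'I_n}) r : sorted ltn (cols M r).
Proof.
apply: (subseq_sorted ltn_trans _ (iota_ltn_sorted 0 n)).
by rewrite /cols -val_enum_ord; apply/map_subseq/filter_subseq.
Qed.

Lemma cols_bound n (M : seq {set 'I_n}) r j : j \in cols M r -> j < n.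
Proof. by case/mapP=> i _ ->; apply: ltn_ord. Qed.

Lemma size_cols n (M : seq {set 'I_n}) r : size (cols M r) = #|nth set0 M r.-1|.
Proof.
rewrite /cols size_map size_filter cardE /enum_mem size_filter.
by rewrite (eq_filter (a2 := predT)) // filter_predT.
Qed.

Lemma maj_eq_charge_cw n (M : seq {set 'I_n}) :
  (forall r, 0 < r < size M -> #|nth set0 M r| <= #|nth set0 M r.-1|) ->
  maj M = charge (cw M).
Proof.
move=> Hsz; rewrite /maj majrec_rows /charge cw_word.
apply: maj_rows_charge => //.
- exact: sorted_cols.
- exact: cols_bound.
- by move=> r Hr; rewrite !size_cols; apply: Hsz.
Qed.

Lemma nth_conj_part lam i : i < head 0 lam ->
  nth 0 (conj_part lam) i = count (fun x => i < x) lam.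
Proof. by move=> Hi; rewrite /conj_part (nth_map 0) ?size_iota // nth_iota. Qed.

Theorem theorem3p17 (lam : seq nat) (n : nat) (M : seq {set 'I_n}) :
  is_partition lam -> size lam <= n -> in_MLQ lam M ->
  maj M = charge (cw M).
Proof.
move=> _ _ /andP[/eqP Hsize Hrows]; apply: maj_eq_charge_cw => r /andP[Hr HrM].
have row_card i : i < size M -> #|nth set0 M i| = count (fun x => i < x) lam.
  by move=> Hi; rewrite (eqP (all2_nth set0 0 Hrows Hi)) nth_conj_part -?Hsize.
rewrite !row_card ?(leq_ltn_trans (leq_pred r)) //.
by apply: sub_count => x /=; rewrite prednK // => /ltnW.
Qed.
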